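(* Let $R$ be a commutative ring and $\eta:R\to R^{(-1)}R$ the canonical map. Then: (i) for each prime ideal $\mathfrak q$ of $R^{(-1)}R$, the localization $(R^{(-1)}R)_{\mathfrak q}$ is a field, canonically isomorphic (via the map induced by $\eta$) to the residue field $\kappa(\mathfrak p)=R_{\mathfrak p}/\mathfrak pR_{\mathfrak p}$, where $\mathfrak p=\eta^{-1}(\mathfrak q)$; (ii) the ring $R^{(-1)}R$ is absolutely flat.
   Context: For $a,b$ in a commutative ring, $b$ is a pointwise inverse of $a$ if $a=a^2b$ and $b=b^2a$. For a subset $S\subseteq R$, $S^{(-1)}R=R[x_s:s\in S]/I$ where $I$ is generated by $sx_s^2-x_s$ and $s^2x_s-s$ ($s\in S$), with canonical map $\eta$; here $S=R$. A commutative ring is absolutely flat if every module over it is flat. *)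

From mathcomp Require Import all_boot all_order all_algebra.
Set Implicit Arguments. Unset Strict Implicit. Unset Printing Implicit Defensive.
Import GRing.Theory.
Local Open Scope ring_scope.

Definition pointwise_inverse (T : comPzRingType) (a b : T) : Prop :=
  a = a ^+ 2 * b /\ b = b ^+ 2 * a.

(** (A, eta, x) is R^(-1)R = R[x_s : s in R]/(s x_s^2 - x_s, s^2 x_s - s),
    characterized by its universal property: it is the initial commutative
    R-algebra equipped with a family (x_s) such that x_s is a pointwise
    inverse of eta s, for every s. *)
Definition is_pinv_hull (R A : comPzRingType) (eta : {rmorphism R -> A})
  (x : R -> A) : Prop :=
  (forall s : R, pointwise_inverse (eta s) (x s)) /\
  forall (B : comPzRingType) (f : {rmorphism R -> B}) (y : R -> B),
    (forall s : R, pointwise_inverse (f s) (y s)) ->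
    (exists g : {rmorphism A -> B},
        (forall r, g (eta r) = f r) /\ (forall s, g (x s) = y s)) /\
    (forall g1 g2 : {rmorphism A -> B},
        (forall r, g1 (eta r) = f r) -> (forall s, g1 (x s) = y s) ->
        (forall r, g2 (eta r) = f r) -> (forall s, g2 (x s) = y s) ->
        g1 =1 g2).

Definition prime_ideal (A : comPzRingType) (q : A -> Prop) : Prop :=
  [/\ q 0,
      (forall a b, q a -> q b -> q (a + b)),
      (forall a b, q b -> q (a * b)),
      ~ q 1 &
      (forall a b, q (a * b) -> q a \/ q b)].

(** Localization A_q at a prime q, presented by fractions a/s (s not in q)
    with the usual equivalence and operations. *)
Section Localization.
Variables (A : comPzRingType) (q : A -> Prop).

Definition loc_eq (x y : A * A) : Prop :=
  exists u, ~ q u /\ u * (x.1 * y.2 - y.1 * x.2) = 0.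
Definition loc_add (x y : A * A) : A * A := (x.1 * y.2 + y.1 * x.2, x.2 * y.2).
Definition loc_mul (x y : A * A) : A * A := (x.1 * y.1, x.2 * y.2).
Definition loc_zero : A * A := (0, 1).
Definition loc_one : A * A := (1, 1).

Definition loc_is_field : Prop :=
  ~ loc_eq loc_zero loc_one /\
  forall x : A * A, ~ q x.2 -> ~ loc_eq x loc_zero ->
    exists y : A * A, ~ q y.2 /\ loc_eq (loc_mul x y) loc_one.

(** Residue field kappa(q) = A_q / q A_q: two fractions are identified when
    their difference in A_q lies in the ideal q A_q = { c/w : c in q }. *)
Definition kappa_eq (x y : A * A) : Prop :=
  exists c w, q c /\ ~ q w /\
    loc_eq (x.1 * y.2 - y.1 * x.2, x.2 * y.2) (c, w).
End Localization.

(** Tensor products M (x)_A N as the free abelian group on M x N (formal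
    integer combinations, compared coefficientwise) modulo the subgroup of
    bilinearity relations; flatness and absolute flatness. *)
Section Tensor.
Variables (A : comPzRingType) (M N : lmodType A).

Definition fcoef (s : seq (int * (M * N))) (p : M * N) : int :=
  \sum_(c <- s | c.2 == p) c.1.

Inductive tens_rel : seq (int * (M * N)) -> Prop :=
| tens_rel_addl m m' n :
    tens_rel [:: (1, (m + m', n)); (-1, (m, n)); (-1, (m', n))]
| tens_rel_addr m n n' :
    tens_rel [:: (1, (m, n + n')); (-1, (m, n)); (-1, (m, n'))]
| tens_rel_scale (a : A) m n :
    tens_rel [:: (1, (a *: m, n)); (-1, (m, a *: n))]
| tens_rel_nil : tens_rel [::]
| tens_rel_cat s t : tens_rel s -> tens_rel t -> tens_rel (s ++ t)
| tens_rel_zscale (k : int) s :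
    tens_rel s -> tens_rel (map (fun c => (k * c.1, c.2)) s)
| tens_rel_free s t : tens_rel s -> fcoef s =1 fcoef t -> tens_rel t.
End Tensor.

(** M is flat: for every injective A-linear f : N' -> N, the induced map
    M (x) N' -> M (x) N is injective (i.e. has trivial kernel). *)
Definition flat_module (A : comPzRingType) (M : lmodType A) : Prop :=
  forall (N' N : lmodType A) (f : {linear N' -> N}), injective f ->
  forall s : seq (int * (M * N')),
    tens_rel (map (fun c => (c.1, (c.2.1, f c.2.2))) s) -> tens_rel s.

Definition absolutely_flat (A : comPzRingType) : Prop :=
  forall M : lmodType A, flat_module M.

(* Every element of A = R^(-1)R is a piecewise fraction: on each piece e_i of
   a partition of unity by orthogonal idempotents it equals eta r_i * x t_i,
   where e_i * (eta t_i * x t_i) = e_i, i.e. eta t_i is invertible on the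
   piece.  Piecewise fractions form a subring containing eta R and the x s, so
   by the universal property they exhaust A; swapping r_i and t_i gives a
   pointwise inverse, so A is von Neumann regular.

   (i) In a regular ring every element of a prime q is killed by an element
   outside q, so A_q is a field, and eta induces kappa(p) -> A_q; it is onto
   because every element of A is locally at q a fraction eta r / eta t.

   (ii) Over a regular ring finite linear systems can be solved variable by
   variable, the coefficients of the eliminated variable being absorbed by a
   single combination; hence every submodule N' of N is pure.  A tensor
   relation in M (x) N involves finitely many bilinearity instances, and
   purity yields a map N -> N' respecting those instances and retracting N'
   on the relevant points, which pulls the relation back to M (x) N'. *)

From HB Require Import structures.
From mathcomp Require Import all_boot all_order all_algebra.
From mathcomp Require Import ring.
From Stdlib Require Import ClassicalEpsilon Classical.
Import GRing.Theory.
Local Open Scope ring_scope.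
Set Implicit Arguments. Unset Strict Implicit.

Definition regular_ring (T : comPzRingType) : Prop :=
  forall a : T, exists b, pointwise_inverse a b.

Section PointwiseInverse.
Variable T : comPzRingType.
Implicit Types a b c d : T.

Lemma pointwise_inverse_uniq a b b' :
  pointwise_inverse a b -> pointwise_inverse a b' -> b = b'.
Proof.
move=> [h1 h2] [h1' h2'].
have E1 : a * b = a * b' * (a * b) by rewrite {1}h1' expr2; ring.
have E2 : a * b' = a * b * (a * b') by rewrite {1}h1 expr2; ring.
have E : a * b = a * b' by rewrite E1 mulrC -E2.
have F1 : b = b * (a * b') by rewrite -E {1}h2 expr2; ring.
have F2 : b' = b' * (a * b) by rewrite E {1}h2' expr2; ring.
by rewrite F1 {2}F2; ring.
Qed.

Lemma pointwise_inverseM a b c d : pointwise_inverse a b ->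
  pointwise_inverse c d -> pointwise_inverse (a * c) (b * d).
Proof.
by move=> [h1 h2] [h3 h4]; split; [rewrite {1}h1 {1}h3 | rewrite {1}h2 {1}h4];
  rewrite !expr2; ring.
Qed.

Lemma pointwise_inverse_sym a b : pointwise_inverse a b -> pointwise_inverse b a.
Proof. by case. Qed.

Lemma pointwise_inverse1 : pointwise_inverse (1 : T) 1.
Proof. by split; rewrite expr1n mulr1. Qed.

Lemma pointwise_inverse_absorbl a b : pointwise_inverse a b -> a * (a * b) = a.
Proof. by move=> [h _]; rewrite mulrA -expr2 -h. Qed.

Lemma pointwise_inverse_absorbr a b : pointwise_inverse a b -> b * (a * b) = b.
Proof. by move=> [_ h]; rewrite mulrCA mulrC -expr2 -h. Qed.

Lemma pointwise_inverse_idem a b :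
  pointwise_inverse a b -> (a * b) * (a * b) = a * b.
Proof. by move=> h; rewrite -mulrA pointwise_inverse_absorbr. Qed.

End PointwiseInverse.

Section PrimeIdeal.
Variables (T : comPzRingType) (q : T -> Prop).
Hypothesis qP : prime_ideal q.

Lemma prime_ideal_sum (I : finType) (F : I -> T) :
  (forall i, q (F i)) -> q (\sum_i F i).
Proof. by case: qP => q0 qD _ _ _ hF; elim/big_ind: _. Qed.

Lemma prime_ideal_mulr a b : q a -> q (a * b).
Proof. by case: qP => _ _ qM _ _ ha; rewrite mulrC; apply: qM. Qed.

Lemma prime_ideal_notin_mul a b : ~ q a -> ~ q b -> ~ q (a * b).
Proof. by case: qP => _ _ _ _ qM ha hb /qM []. Qed.

Lemma prime_ideal_notin_1B a : q a -> ~ q (1 - a).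
Proof.
case: qP => _ qD _ q1 _ ha h1a; apply: q1.
by rewrite -(subrK a 1); apply: qD.
Qed.

Lemma pointwise_inverse_loc_zero a b : pointwise_inverse a b -> q a ->
  exists2 u, ~ q u & u * a = 0.
Proof.
move=> hab ha; exists (1 - a * b); first exact: prime_ideal_notin_1B (prime_ideal_mulr _ ha).
by rewrite mulrBl mul1r [a * b * a]mulrC pointwise_inverse_absorbl // subrr.
Qed.

End PrimeIdeal.

Section OrthogonalPartition.
Variable T : comPzRingType.

Definition orthogonal_partition (I : finType) (e : I -> T) : Prop :=
  \sum_i e i = 1 /\ forall i j, i != j -> e i * e j = 0.

Variables (I J : finType) (e : I -> T) (e' : J -> T).
Hypotheses (he : orthogonal_partition e) (he' : orthogonal_partition e').

Lemma partition_idem i : e i * e i = e i.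
Proof.
case: he => sum1 orth.
have : e i * \sum_j e j = e i by rewrite sum1 mulr1.
rewrite mulr_sumr (bigD1 i) //= big1 ?addr0 // => j hj.
by apply: orth; rewrite eq_sym.
Qed.

Lemma partition_mul_sum i (F : I -> T) : e i * \sum_j e j * F j = e i * F i.
Proof.
case: he => _ orth; rewrite mulr_sumr (bigD1 i) //= big1 ?addr0.
  by rewrite mulrA partition_idem.
by move=> j hj; rewrite mulrA orth ?mul0r // eq_sym.
Qed.

Lemma partition_sumM (F G : I -> T) :
  (\sum_i e i * F i) * (\sum_i e i * G i) = \sum_i e i * (F i * G i).
Proof.
rewrite mulr_suml; apply: eq_bigr => i _.
by rewrite mulrAC partition_mul_sum; ring.
Qed.

Lemma partition_pointwise_inverse (F G : I -> T) :
  (forall i, pointwise_inverse (F i) (G i)) ->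
  pointwise_inverse (\sum_i e i * F i) (\sum_i e i * G i).
Proof.
by move=> hFG; split; rewrite expr2 !partition_sumM; apply: eq_bigr => i _;
  rewrite -expr2 -?(hFG i).1 -?(hFG i).2.
Qed.

Lemma partition_notin_prime (q : T -> Prop) : prime_ideal q ->
  exists i, ~ q (e i).
Proof.
move=> qP; apply: NNPP => hn; case: (qP) => _ _ _ q1 _; apply: q1.
case: he => <- _; apply: prime_ideal_sum => // i.
by apply: NNPP => hi; apply: hn; exists i.
Qed.

Lemma orthogonal_partitionX :
  orthogonal_partition (fun p : I * J => e p.1 * e' p.2).
Proof.
case: he he' => sum1 orth [sum1' orth']; split.
  rewrite -(pair_bigA _ (fun i j => e i * e' j)) /= -sum1.
  by apply: eq_bigr => i _; rewrite -mulr_sumr sum1' mulr1.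
move=> [i j] [i' j'] /=; case: (eqVneq i i') => [<- hj|hi _].
  by rewrite mulrACA orth' ?mulr0 //; apply: contraNneq hj => ->.
by rewrite mulrACA orth // mul0r.
Qed.

Lemma partition_sum_pairl (F : I -> T) :
  \sum_i e i * F i = \sum_(p : I * J) e p.1 * e' p.2 * F p.1.
Proof.
case: he' => sum1' _; rewrite -(pair_bigA _ (fun i j => e i * e' j * F i)) /=.
apply: eq_bigr => i _.
by rewrite -mulr_suml -mulr_sumr sum1' mulr1.
Qed.

Lemma partition_sum_pairr (F : J -> T) :
  \sum_j e' j * F j = \sum_(p : I * J) e p.1 * e' p.2 * F p.2.
Proof.
case: he => sum1 _; rewrite -(pair_bigA _ (fun i j => e i * e' j * F j)) /=.
rewrite exchange_big /=; apply: eq_bigr => j _.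
by rewrite -mulr_suml -mulr_suml sum1 mul1r.
Qed.

End OrthogonalPartition.

Section PiecewiseFraction.
Variables (R A : comPzRingType) (eta : {rmorphism R -> A}) (x : R -> A).
Hypothesis hx : forall s, pointwise_inverse (eta s) (x s).

Definition eidem (s : R) : A := eta s * x s.

Lemma pinv_familyM s t : x (s * t) = x s * x t.
Proof.
by apply: (pointwise_inverse_uniq (hx (s * t))); rewrite rmorphM; apply: pointwise_inverseM.
Qed.

Lemma pinv_family1 : x 1 = 1.
Proof.
by apply: (pointwise_inverse_uniq (hx 1)); rewrite rmorph1; apply: pointwise_inverse1.
Qed.

Lemma eidemM s t : eidem (s * t) = eidem s * eidem t.
Proof. by rewrite /eidem pinv_familyM rmorphM; ring. Qed.

Lemma eidem1 : eidem 1 = 1.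
Proof. by rewrite /eidem pinv_family1 rmorph1 mulr1. Qed.

Lemma eidem_idem s : eidem s * eidem s = eidem s.
Proof. exact: pointwise_inverse_idem. Qed.

(* On the i-th piece, eta (t i) is invertible with inverse x (t i), so [a] is
   there the fraction eta (r i) / eta (t i). *)
Definition piecewise_fraction (a : A) : Prop :=
  exists (I : finType) (e : I -> A) (r t : I -> R),
    [/\ orthogonal_partition e, forall i, e i * eidem (t i) = e i &
        a = \sum_i e i * (eta (r i) * x (t i))].

Lemma piecewise_fraction_eta r : piecewise_fraction (eta r).
Proof.
exists 'I_1, (fun=> 1), (fun=> r), (fun=> 1); split.
- by split=> [|i j]; rewrite ?big_ord1 // !ord1 eqxx.
- by move=> _; rewrite eidem1 mulr1.
- by rewrite big_ord1 pinv_family1 !mulr1 mul1r.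
Qed.

Lemma piecewise_fraction_x s : piecewise_fraction (x s).
Proof.
exists bool, (fun b => if b then eidem s else 1 - eidem s),
  (fun b => if b then 1 else 0), (fun b => if b then s else 1); split.
- split; first by rewrite big_bool /= addrC subrK.
  by move=> [] [] //= _; rewrite ?mulrBl ?mulrBr ?mul1r ?mulr1 eidem_idem subrr.
- by move=> [] /=; rewrite ?eidem_idem // eidem1 mulr1.
- rewrite big_bool /= rmorph0 rmorph1 !mul0r mulr0 addr0 mul1r.
  by rewrite /eidem mulrC pointwise_inverse_absorbr.
Qed.

Lemma piecewise_fractionN a : piecewise_fraction a -> piecewise_fraction (- a).
Proof.
case=> I [e [r [t [he het ->]]]].
exists I, e, (fun i => - r i), t; split => //.
by rewrite -sumrN; apply: eq_bigr => i _; rewrite rmorphN mulNr mulrN.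
Qed.

Lemma piecewise_fractionD a b : piecewise_fraction a -> piecewise_fraction b ->
  piecewise_fraction (a + b).
Proof.
case=> I [e [r [t [he het ->]]]]; case=> J [e' [r' [t' [he' het' ->]]]].
exists (I * J)%type, (fun p => e p.1 * e' p.2),
  (fun p => r p.1 * t' p.2 + r' p.2 * t p.1), (fun p => t p.1 * t' p.2); split.
- exact: orthogonal_partitionX.
- by move=> [i j] /=; rewrite eidemM mulrACA het het'.
rewrite (partition_sum_pairl e he') (partition_sum_pairr e' he) -big_split /=.
apply: eq_bigr => -[i j] _ /=; rewrite rmorphD !rmorphM pinv_familyM.
rewrite -{1}het' -{2}het /eidem; ring.
Qed.

Lemma piecewise_fractionM a b : piecewise_fraction a -> piecewise_fraction b ->
  piecewise_fraction (a * b).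
Proof.
case=> I [e [r [t [he het ->]]]]; case=> J [e' [r' [t' [he' het' ->]]]].
exists (I * J)%type, (fun p => e p.1 * e' p.2),
  (fun p => r p.1 * r' p.2), (fun p => t p.1 * t' p.2); split.
- exact: orthogonal_partitionX.
- by move=> [i j] /=; rewrite eidemM mulrACA het het'.
rewrite (partition_sum_pairl e he') (partition_sum_pairr e' he).
rewrite (partition_sumM (orthogonal_partitionX he he')).
by apply: eq_bigr => -[i j] _ /=; rewrite !rmorphM pinv_familyM; ring.
Qed.

Lemma piecewise_fraction_pinv a : piecewise_fraction a ->
  exists b, pointwise_inverse a b.
Proof.
case=> I [e [r [t [he _ ->]]]].
exists (\sum_i e i * (eta (t i) * x (r i))); apply: partition_pointwise_inverse => // i.
by rewrite mulrC; apply: pointwise_inverseM (pointwise_inverse_sym (hx _)) (hx _).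
Qed.

Lemma piecewise_fraction_local (q : A -> Prop) a : prime_ideal q ->
  piecewise_fraction a ->
  exists e r t, [/\ ~ q e, e * eidem t = e & e * a = e * (eta r * x t)].
Proof.
move=> qP; case=> I [e [r [t [he het ->]]]].
have [i hi] := partition_notin_prime he qP.
by exists (e i), (r i), (t i); split; rewrite ?het ?partition_mul_sum.
Qed.

End PiecewiseFraction.

Section HullInduction.
Variables (R A : comPzRingType) (eta : {rmorphism R -> A}) (x : R -> A).
Hypothesis hA : is_pinv_hull eta x.
Variable P : A -> Prop.
Hypotheses (PB : forall a b, P a -> P b -> P (a - b))
  (PM : forall a b, P a -> P b -> P (a * b))
  (Peta : forall r, P (eta r)) (Px : forall s, P (x s)).

Definition hull_pred (a : A) : bool :=
  if excluded_middle_informative (P a) then true else false.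

Lemma hull_predP a : hull_pred a <-> P a.
Proof. by rewrite /hull_pred; case: excluded_middle_informative. Qed.

Lemma hull_pred_subring : GRing.subring_closed (hull_pred : {pred A}).
Proof.
split.
- by apply/hull_predP; rewrite -(rmorph1 eta).
- by move=> a b /hull_predP ha /hull_predP hb; apply/hull_predP/PB.
- by move=> a b /hull_predP ha /hull_predP hb; apply/hull_predP/PM.
Qed.

Definition hull_sub := {a : A | hull_pred a}.
HB.instance Definition _ := [isSub of hull_sub for @proj1_sig A _].
HB.instance Definition _ := [Choice of hull_sub by <:].
HB.instance Definition _ :=
  GRing.SubChoice_isSubComPzRing.Build A hull_pred hull_sub hull_pred_subring.

Definition hull_sub_eta (r : R) : hull_sub := exist _ (eta r) (proj2 (hull_predP _) (Peta r)).
Definition hull_sub_x (s : R) : hull_sub := exist _ (x s) (proj2 (hull_predP _) (Px s)).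

Lemma hull_sub_eta_zmod : zmod_morphism hull_sub_eta.
Proof. by move=> a b; apply: val_inj; rewrite /= rmorphB. Qed.

Lemma hull_sub_eta_monoid : monoid_morphism hull_sub_eta.
Proof. by split=> [|a b]; apply: val_inj; rewrite /= ?rmorph1 ?rmorphM. Qed.

HB.instance Definition _ :=
  GRing.isZmodMorphism.Build R hull_sub hull_sub_eta hull_sub_eta_zmod.
HB.instance Definition _ :=
  GRing.isMonoidMorphism.Build R hull_sub hull_sub_eta hull_sub_eta_monoid.

(* The universal map A -> hull_sub, followed by the inclusion, agrees with
   the identity on generators, hence is the identity. *)
Lemma pinv_hull_ind a : P a.
Proof.
have hsub s : pointwise_inverse (hull_sub_eta s) (hull_sub_x s).
  by have [h1 h2] := proj1 hA s; split; apply: val_inj; rewrite /= ?rmorphM.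
have [[g [g_eta g_x]] _] := proj2 hA _ _ _ hsub.
have [_ uniq] := proj2 hA _ _ _ (proj1 hA).
have <- : val (g a) = a.
  by apply: (uniq (val \o g : {rmorphism A -> A}) idfun) => //= r;
    rewrite ?g_eta ?g_x.
exact/hull_predP/valP.
Qed.

End HullInduction.

Lemma pinv_hull_piecewise (R A : comPzRingType) (eta : {rmorphism R -> A}) (x : R -> A) :
  is_pinv_hull eta x -> forall a, piecewise_fraction eta x a.
Proof.
move=> hA; have hx := proj1 hA.
apply: (pinv_hull_ind hA) => [a b ha hb|a b|r|s].
- exact/(piecewise_fractionD hx ha)/piecewise_fractionN.
- exact: piecewise_fractionM.
- exact: piecewise_fraction_eta.
- exact: piecewise_fraction_x.
Qed.

Lemma pinv_hull_regular (R A : comPzRingType) (eta : {rmorphism R -> A}) (x : R -> A) :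
  is_pinv_hull eta x -> regular_ring A.
Proof.
by move=> hA a; apply: (piecewise_fraction_pinv (proj1 hA)); apply: pinv_hull_piecewise.
Qed.

Section LinearSystems.
Variables (A : comPzRingType) (N' : lmodType A).

Definition solves (X : lmodType A) (F : N' -> X) (n : nat)
    (e : (nat -> A) * N') (y : nat -> X) : Prop :=
  \sum_(k < n) e.1 k *: y k = F e.2.

Definition eq_comb (e : (nat -> A) * N') (a : A) (e' : (nat -> A) * N') :=
  (fun k => e.1 k + a * e'.1 k, e.2 + a *: e'.2).

Lemma solves_comb (X : lmodType A) (F : {linear N' -> X}) n e a e' y :
  solves F n e y -> solves F n e' y -> solves F n (eq_comb e a e') y.
Proof.
rewrite /solves /= linearD linearZZ => <- <-.
by rewrite scaler_sumr -big_split; apply: eq_bigr => k _; rewrite scalerDl scalerA.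
Qed.

Hypothesis regA : regular_ring A.

Lemma regular_absorb (c E : A) : exists u, c * (E + u * (1 - E) * c) = c.
Proof.
have [b [hb _]] := regA (c * (1 - E)).
exists ((1 - E) * b).
have -> : c * (E + (1 - E) * b * (1 - E) * c) = c * E + (c * (1 - E)) ^+ 2 * b.
  by rewrite expr2; ring.
by rewrite -hb; ring.
Qed.

Variables (N : lmodType A) (f : {linear N' -> N}).

(* A combination e0 of the equations whose coefficient of y n acts as a unit
   on every coefficient of y n; subtracting multiples of e0 eliminates y n. *)

Lemma solves_eliminate (I : eqType) (E : I -> (nat -> A) * N') n (s : seq I) :
  exists e0, {in s, forall i, (E i).1 n * e0.1 n = (E i).1 n} /\
    forall y, {in s, forall i, solves f n.+1 (E i) y} -> solves f n.+1 e0 y.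
Proof.
elim: s => [|j s [e0 [h0 hsol]]].
  exists (fun _ => 0, 0); split=> [i|y _]; rewrite ?in_nil // /solves linear0.
  by rewrite big1 // => k _; rewrite scale0r.
have [u hu] := regular_absorb ((E j).1 n) (e0.1 n).
exists (eq_comb e0 (u * (1 - e0.1 n)) (E j)); split=> [i /predU1P[-> //|hi] | y hy].
  transitivity ((E i).1 n * e0.1 n +
                 u * (E j).1 n * ((E i).1 n - (E i).1 n * e0.1 n)); first by rewrite /=; ring.
  by rewrite h0 // subrr mulr0 addr0.
apply: solves_comb; last exact/hy/mem_head.
by apply: hsol => i hi; apply/hy; rewrite inE hi orbT.
Qed.

Hypothesis f_inj : injective f.

(* Over a regular ring every submodule is pure. *)
Lemma regular_solves_descend (I : eqType) (s : seq I) n (E : I -> (nat -> A) * N') :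
  (exists y, {in s, forall i, solves f n (E i) y}) ->
  exists z, {in s, forall i, solves id n (E i) z}.
Proof.
elim: n E => [|n IH] E [y hy].
  exists (fun _ => 0) => i /hy; rewrite /solves !big_ord0 => h.
  by apply: f_inj; rewrite -h linear0.
have [e0 [h0 hsol]] := solves_eliminate E n s.
have [z hz] : exists z,
    {in s, forall i, solves id n (eq_comb (E i) (- (E i).1 n) e0) z}.
  apply: (IH (fun i => eq_comb (E i) (- (E i).1 n) e0)); exists y => i hi.
  have := solves_comb (- (E i).1 n) (hy i hi) (hsol y hy).
  by rewrite /solves big_ord_recr /= mulNr (h0 i hi) subrr scale0r addr0.
exists (fun k => if (k < n)%N then z k else e0.2 - \sum_(j < n) e0.1 j *: z j).
move=> i hi; have := hz i hi.
rewrite /solves /=; under eq_bigr do rewrite scalerDl -scalerA.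
rewrite big_split /= -scaler_sumr !scaleNr => hred.
rewrite big_ord_recr /= ltnn; under eq_bigr => k _ do rewrite ltn_ord.
by rewrite scalerBr addrCA hred addrC subrK.
Qed.

End LinearSystems.

Lemma sum_by_keys (K : eqType) (s : seq (int * K)) (keys : seq K) (P : pred K) :
  uniq keys -> (forall c, c \in s -> c.2 \in keys) ->
  \sum_(c <- s | P c.2) c.1 = \sum_(k <- keys | P k) \sum_(c <- s | c.2 == k) c.1.
Proof.
move=> ukeys skeys; rewrite (exchange_big_dep xpredT) //= big_mkcond.
rewrite big_seq [RHS]big_seq; apply: eq_bigr => c hc.
under eq_bigl => k do rewrite andbC eq_sym.
rewrite -big_filter_cond filter_pred1_uniq ?skeys //.
by rewrite big_cons big_nil addr0.
Qed.

Section TensorTransport.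
Variables (A : comPzRingType) (M N : lmodType A).

Lemma fcoef_map (M' N' : lmodType A) (h : M * N -> M' * N') s t :
  fcoef s =1 fcoef t ->
  fcoef (map (fun c => (c.1, h c.2)) s) =1 fcoef (map (fun c => (c.1, h c.2)) t).
Proof.
move=> hst p; rewrite /fcoef !big_map /=.
have keys_uniq := undup_uniq (map snd (s ++ t)).
rewrite !(sum_by_keys (fun k => h k == p) keys_uniq) => [|c hc|c hc].
- by apply: eq_bigr => k _; apply: hst.
- by rewrite mem_undup map_f // mem_cat hc orbT.
- by rewrite mem_undup map_f // mem_cat hc.
Qed.

Definition defect (X : lmodType A) (g : N -> X) (c : N * N + A * N) : X :=
  match c with
  | inl (n, n') => g (n + n') - g n - g n'
  | inr (a, n) => g (a *: n) - a *: g n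
  end.

(* A tensor relation is derived from finitely many instances of bilinearity,
   so its image under any g : N -> N' that is additive and A-linear on the
   finitely many arguments involved is again a relation. *)
Lemma tens_rel_transport (r : seq (int * (M * N))) : tens_rel r ->
  exists C : seq (N * N + A * N), forall (N' : lmodType A) (g : N -> N'),
    {in C, forall c, defect g c = 0} ->
    tens_rel (map (fun c => (c.1, (c.2.1, g c.2.2))) r).
Proof.
elim=> [m m' n|m n n'|a m n| |s t _ [C1 h1] _ [C2 h2]|k s _ [C h]|s t _ [C h] hst].
- by exists [::] => N' g _; apply: tens_rel_addl.
- exists [:: inl (n, n')] => N' g /(_ _ (mem_head _ _)) /eqP.
  by rewrite subr_eq0 subr_eq => /eqP /= ->; rewrite addrC; apply: tens_rel_addr.
- exists [:: inr (a, n)] => N' g /(_ _ (mem_head _ _)) /eqP.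
  by rewrite subr_eq0 => /eqP /= ->; apply: tens_rel_scale.
- by exists [::] => N' g _; apply: tens_rel_nil.
- exists (C1 ++ C2) => N' g hg; rewrite map_cat; apply: tens_rel_cat.
    by apply: h1 => c hc; apply: hg; rewrite mem_cat hc.
  by apply: h2 => c hc; apply: hg; rewrite mem_cat hc orbT.
- exists C => N' g hg; have := tens_rel_zscale k (h N' g hg).
  by rewrite -!map_comp.
- exists C => N' g hg; apply: (tens_rel_free (h N' g hg)).
  exact: (fcoef_map (fun p => (p.1, g p.2)) hst).
Qed.

End TensorTransport.

Lemma sum_delta (A : comPzRingType) (X : lmodType A) n (y : nat -> X) i :
  (i < n)%N -> \sum_(k < n) ((k : nat) == i)%:R *: y k = y i.
Proof.
move=> lt_in; rewrite (bigD1 (Ordinal lt_in)) //= eqxx scale1r big1 ?addr0 //.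
move=> k /negbTE; rewrite -val_eqE /= => ->; exact: scale0r.
Qed.

Section PartialRetraction.
Variables (A : comPzRingType) (N' N : lmodType A) (f : {linear N' -> N}).
Variables (C : seq (N * N + A * N)) (L : seq N').

Definition constraint_points (c : N * N + A * N) : seq N :=
  match c with inl (n, n') => [:: n; n'; n + n'] | inr (a, n) => [:: n; a *: n] end.

Definition points : seq N := flatten (map constraint_points C) ++ map f L.

Definition point_index (p : N) : nat := index p points.

(* Unknown number k stands for the value at the k-th point. *)
Definition constraint_coef (c : N * N + A * N) (k : nat) : A :=
  match c with
  | inl (n, n') => (k == point_index (n + n'))%:R
                     - (k == point_index n)%:R - (k == point_index n')%:R
  | inr (a, n) => (k == point_index (a *: n))%:R - a * (k == point_index n)%:R
  end.

Definition value_coef (n' : N') (k : nat) : A := (k == point_index (f n'))%:R.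

Lemma constraint_points_mem c p : c \in C -> p \in constraint_points c -> p \in points.
Proof. by move=> hc hp; rewrite mem_cat; apply/orP; left; apply/flatten_mapP; exists c. Qed.

Lemma constraint_coef_sum (X : lmodType A) (y : nat -> X) c : c \in C ->
  \sum_(k < size points) constraint_coef c k *: y k
    = defect (fun p => y (point_index p)) c.
Proof.
move=> hc; have mem p : p \in constraint_points c -> (point_index p < size points)%N.
  by move=> hp; rewrite index_mem (constraint_points_mem hc hp).
case: c hc mem => [[n n']|[a n]] _ mem /=.
  under eq_bigr do rewrite !scalerBl.
  by rewrite !sumrB !sum_delta ?mem ?inE ?eqxx ?orbT.
under eq_bigr do rewrite scalerBl -scalerA.
by rewrite sumrB -scaler_sumr !sum_delta ?mem ?inE ?eqxx ?orbT.
Qed.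

Lemma value_coef_sum (X : lmodType A) (y : nat -> X) n' : n' \in L ->
  \sum_(k < size points) value_coef n' k *: y k = y (point_index (f n')).
Proof. by move=> hn'; apply: sum_delta; rewrite index_mem mem_cat map_f ?orbT. Qed.

Hypotheses (regA : regular_ring A) (f_inj : injective f).

(* Purity of f, applied to the linear system whose unknowns are the values
   of g at the finitely many points involved. *)
Lemma regular_partial_retraction : exists g : N -> N',
  {in C, forall c, defect g c = 0} /\ {in L, forall n', g (f n') = n'}.
Proof.
pose E (i : N * N + A * N + N') :=
  match i with inl c => (constraint_coef c, 0) | inr n' => (value_coef n', n') end.
have [z hz] : exists z, {in map inl C ++ map inr L, forall i, solves id (size points) (E i) z}.
  apply: (regular_solves_descend regA f_inj); exists (nth 0 points).
  move=> i; rewrite mem_cat => /orP[] /mapP [c hc ->]; rewrite /solves /=.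
    rewrite constraint_coef_sum // linear0.
    have nthP p : p \in constraint_points c -> nth 0 points (point_index p) = p.
      by move=> hp; apply/nth_index/(constraint_points_mem hc hp).
    case: c hc nthP => [[n n']|[a n]] _ nthP /=;
      rewrite !nthP ?inE ?eqxx ?orbT //; first by rewrite addrAC addrK subrr.
    by rewrite subrr.
  by rewrite value_coef_sum // nth_index // mem_cat map_f ?orbT.
exists (fun p => z (point_index p)); split=> [c hc | n' hn'].
  by rewrite -constraint_coef_sum //; apply: (hz (inl c)); rewrite mem_cat map_f.
by rewrite -value_coef_sum //; apply: (hz (inr n')); rewrite mem_cat map_f ?orbT.
Qed.

End PartialRetraction.

Lemma regular_absolutely_flat (A : comPzRingType) :
  regular_ring A -> absolutely_flat A.
Proof.
move=> regA M N' N f f_inj s hs.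
have [C hC] := tens_rel_transport hs.
have [g [gC gf]] := regular_partial_retraction C [seq c.2.2 | c <- s] regA f_inj.
have := hC N' g gC; rewrite -map_comp map_id_in // => -[k [m n']] hc /=.
by rewrite gf // (map_f (fun c => c.2.2) hc).
Qed.

Lemma loc_eq_refl (T : comPzRingType) (q : T -> Prop) y : ~ q 1 -> loc_eq q y y.
Proof. by exists 1; split; rewrite // subrr mulr0. Qed.

Section LocalizationAtPrime.
Variables (T : comPzRingType) (q : T -> Prop).
Hypothesis qP : prime_ideal q.

Lemma regular_loc_is_field : regular_ring T -> loc_is_field q.
Proof.
move=> regT; case: (qP) => q0 _ _ q1 _; split.
  move=> [u [hu]]; rewrite /= mul0r mulr1 sub0r mulrN1 => /eqP.
  by rewrite oppr_eq0 => /eqP u0; apply: hu; rewrite u0.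
move=> [a s] /= _ ha0; have [b hab] := regT a.
have hab1 : q (1 - a * b).
  apply: NNPP => hn; apply: ha0; exists (1 - a * b); split => //=.
  by rewrite mul0r subr0 mulr1 mulrBl mul1r mulrC pointwise_inverse_absorbl // subrr.
have hab_notin : ~ q (a * b) by move=> h; apply: (prime_ideal_notin_1B qP h).
exists (s * b, 1); split=> //; exists (a * b); split=> //=.
transitivity (s * ((a * b) * (a * b) - a * b)); first by ring.
by rewrite pointwise_inverse_idem // subrr mulr0.
Qed.

End LocalizationAtPrime.

Section ResidueMap.
Variables (R A : comPzRingType) (eta : {rmorphism R -> A}) (q : A -> Prop).
Hypothesis qP : prime_ideal q.

Definition loc_map (y : R * R) : A * A := (eta y.1, eta y.2).

Lemma loc_map_rmorphism : ~ q 1 ->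
  loc_eq q (loc_map (loc_one R)) (loc_one A) /\
  forall y z, loc_eq q (loc_map (loc_add y z)) (loc_add (loc_map y) (loc_map z)) /\
              loc_eq q (loc_map (loc_mul y z)) (loc_mul (loc_map y) (loc_map z)).
Proof.
move=> q1; split=> [|y z]; rewrite /loc_map /= ?rmorph1 ?rmorphD ?rmorphM;
  by [apply: loc_eq_refl | split; apply: loc_eq_refl].
Qed.

Lemma loc_map_kappa_inj y z : ~ q (eta y.2) -> ~ q (eta z.2) ->
  loc_eq q (loc_map y) (loc_map z) -> kappa_eq (fun r => q (eta r)) y z.
Proof.
move=> hy hz [u [hu /= h]].
exists (y.1 * z.2 - z.1 * y.2), (y.2 * z.2); split; [|split].
- have : q (u * eta (y.1 * z.2 - z.1 * y.2)) by rewrite rmorphB !rmorphM h; case: qP.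
  by case: qP => _ _ _ _ qM /qM [/hu|].
- by rewrite rmorphM; apply: prime_ideal_notin_mul.
- by apply: loc_eq_refl; rewrite rmorph1; case: qP.
Qed.

(* Elements of p = eta^-1 q become zero in A_q: in a regular ring every
   element of q is killed by an element outside q. *)
Lemma loc_map_kappa_wd y z : regular_ring A ->
  kappa_eq (fun r => q (eta r)) y z -> loc_eq q (loc_map y) (loc_map z).
Proof.
move=> regA [c [w [hc [hw [u [hu /= /(congr1 eta) h]]]]]].
have [b hb] := regA (eta c); have [v hv vc0] := pointwise_inverse_loc_zero qP hb hc.
exists (v * eta u * eta w); split.
  by apply: (prime_ideal_notin_mul qP) => //; apply: (prime_ideal_notin_mul qP).
rewrite rmorph0 !(rmorphM, rmorphB) in h.
transitivity (v * (eta u * ((eta y.1 * eta z.2 - eta z.1 * eta y.2) * eta w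
                            - eta c * (eta y.2 * eta z.2)))
              + eta u * eta y.2 * eta z.2 * (v * eta c)); first by rewrite /=; ring.
by rewrite h vc0 !mulr0 addr0.
Qed.

End ResidueMap.

Lemma pinv_hull_loc_map_surj (R A : comPzRingType) (eta : {rmorphism R -> A})
    (x : R -> A) (q : A -> Prop) :
  is_pinv_hull eta x -> prime_ideal q -> forall w : A * A, ~ q w.2 ->
  exists y : R * R, ~ q (eta y.2) /\ loc_eq q (loc_map eta y) w.
Proof.
move=> hA qP [w1 w2] /= hw2.
(* Locally at q, w1 = eta r / eta t and w2 = eta r' / eta t'. *)
have [e [r [t [he het hw1]]]] :=
  piecewise_fraction_local qP (pinv_hull_piecewise hA w1).
have [e' [r' [t' [he' het' hw2']]]] :=
  piecewise_fraction_local qP (pinv_hull_piecewise hA w2).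
have ht : ~ q (eta t).
  move=> qt; apply: he; rewrite -het mulrC /eidem -mulrA.
  exact: (prime_ideal_mulr qP _ qt).
have hr' : ~ q (eta r').
  move=> qr'; apply: (prime_ideal_notin_mul qP he' hw2); rewrite hw2' mulrCA.
  exact: (prime_ideal_mulr qP _ qr').
exists (r * t', t * r'); split; first by rewrite rmorphM; apply: prime_ideal_notin_mul.
exists (e * e'); split; first exact: prime_ideal_notin_mul.
rewrite /loc_map /= !rmorphM.
transitivity (e * eta r * eta t' * (e' * w2) - e' * eta t * eta r' * (e * w1));
  first by ring.
rewrite hw1 hw2'.
transitivity (e * eta r * eta r' * (e' * eidem eta x t')
              - e' * eta r * eta r' * (e * eidem eta x t)); first by rewrite /eidem; ring.
by rewrite het het'; ring.
Qed.

Unset Implicit Arguments.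

Theorem theorem3p8 (R A : comPzRingType) (eta : {rmorphism R -> A})
  (x : R -> A) (hA : is_pinv_hull eta x) :
  (forall q : A -> Prop, prime_ideal q ->
     let p : R -> Prop := fun r => q (eta r) in
     let phi : R * R -> A * A := fun y => (eta y.1, eta y.2) in
     [/\ loc_is_field q,
         (forall y : R * R, ~ p y.2 -> ~ q (phi y).2),
         (forall y z : R * R, ~ p y.2 -> ~ p z.2 ->
            kappa_eq p y z -> loc_eq q (phi y) (phi z)),
         loc_eq q (phi (loc_one R)) (loc_one A) /\
         (forall y z : R * R, ~ p y.2 -> ~ p z.2 ->
            loc_eq q (phi (loc_add y z)) (loc_add (phi y) (phi z)) /\
            loc_eq q (phi (loc_mul y z)) (loc_mul (phi y) (phi z))) &
         (forall y z : R * R, ~ p y.2 -> ~ p z.2 ->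
            loc_eq q (phi y) (phi z) -> kappa_eq p y z) /\
         (forall w : A * A, ~ q w.2 ->
            exists y : R * R, ~ p y.2 /\ loc_eq q (phi y) w)]) /\
  absolutely_flat A.
Proof.
have regA := pinv_hull_regular hA.
split; last exact: regular_absolutely_flat.
move=> q qP p phi; have q1 : ~ q 1 by case: qP.
have [hom1 homDM] := loc_map_rmorphism eta q1.
split.
- exact: regular_loc_is_field.
- by [].
- by move=> y z _ _; apply: loc_map_kappa_wd.
- by split=> [|y z _ _]; [apply: hom1 | apply: homDM].
- split=> [y z hy hz | w hw]; first exact: loc_map_kappa_inj.
  exact: pinv_hull_loc_map_surj hA qP w hw.
Qed.
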